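(* Let $Q$ be a quantity space over a field $K$. Then $Q/{\sim}$, with multiplication $[x][y]=[xy]$, is a free abelian group of finite rank.
   Context: A scalable monoid over a (unital, associative) ring $R$ is a monoid $X$ (identity $1_X$, product written $xy$) together with a map $R\times X\to X$, $(\alpha,x)\mapsto\alpha\cdot x$, such that $1\cdot x=x$, $\alpha\cdot(\beta\cdot x)=\alpha\beta\cdot x$ and $\alpha\cdot(xy)=(\alpha\cdot x)y=x(\alpha\cdot y)$ for all $\alpha,\beta\in R$, $x,y\in X$. A quantity space over a field $K$ is a commutative scalable monoid $Q$ over $K$ for which there exists a finite set $\{e_1,\ldots,e_n\}$ of invertible elements of $Q$ (a basis) such that every $x\in Q$ has a unique expansion $x=\mu\cdot\prod_{i=1}^n e_i^{k_i}$ with $\mu\in K$ and $k_1,\ldots,k_n\in\mathbb{Z}$. On $Q$, $x\sim y$ means $\alpha\cdot x=\beta\cdot y$ for some $\alpha,\beta\in K$; this is an equivalence relation compatible with multiplication, $[x]$ denotes the class of $x$ (a dimension), and $Q/{\sim}$ is the set of classes with $[x][y]=[xy]$ and identity $[1_Q]$. *)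

From HB Require Import structures.
From mathcomp Require Import all_boot all_order all_algebra.
Set Implicit Arguments. Unset Strict Implicit. Unset Printing Implicit Defensive.
Import Order.TTheory GRing.Theory Num.Theory.
Local Open Scope ring_scope.

Definition scalable_monoid (R : ringType) (X : Type) (mul : X -> X -> X)
    (one : X) (scale : R -> X -> X) : Prop :=
  [/\ (forall x y z, mul x (mul y z) = mul (mul x y) z),
      (forall x, mul one x = x /\ mul x one = x),
      (forall x, scale 1 x = x),
      (forall a b x, scale a (scale b x) = scale (a * b) x)
    & (forall a x y, scale a (mul x y) = mul (scale a x) y /\
                     scale a (mul x y) = mul x (scale a y))].

Definition zpow (X : Type) (mul : X -> X -> X) (one : X) (e einv : X)
    (k : int) : X :=
  match k with
  | Posz n => iter n (mul e) one
  | Negz n => iter n.+1 (mul einv) one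
  end.

(* prod_{i < n} e_i ^ k_i  (order irrelevant in a commutative monoid). *)
Definition basis_monomial (X : Type) (mul : X -> X -> X) (one : X) (n : nat)
    (e einv : 'I_n -> X) (k : 'I_n -> int) : X :=
  foldr (fun i acc => mul (zpow mul one (e i) (einv i) (k i)) acc) one
    (enum 'I_n).

Definition quantity_space (K : fieldType) (X : Type) (mul : X -> X -> X)
    (one : X) (scale : K -> X -> X) : Prop :=
  [/\ scalable_monoid mul one scale,
      (forall x y, mul x y = mul y x)
    & exists (n : nat) (e einv : 'I_n -> X),
        [/\ (forall i, mul (e i) (einv i) = one /\ mul (einv i) (e i) = one),
            (forall x, exists (mu : K) (k : 'I_n -> int),
                 x = scale mu (basis_monomial mul one e einv k))
          & (forall (mu mu' : K) (k k' : 'I_n -> int),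
                 scale mu (basis_monomial mul one e einv k) =
                 scale mu' (basis_monomial mul one e einv k') ->
                 mu = mu' /\ (forall i, k i = k' i))]].

Definition qsim (K : fieldType) (X : Type) (scale : K -> X -> X) (x y : X) :
    Prop := exists a b : K, scale a x = scale b y.

From HB Require Import structures.
From mathcomp Require Import all_boot all_order all_algebra.
From Stdlib Require Import ClassicalEpsilon.
From mathcomp Require Import zify.
Set Implicit Arguments. Unset Strict Implicit. Unset Printing Implicit Defensive.

Import Order.TTheory GRing.Theory Num.Theory.
Local Open Scope ring_scope.

(* Every quantity is [mu . e^k] for a unique exponent vector [k], and [k] is
   additive because integer powers of the invertible [e i] add in a
   commutative monoid.  So [x |-> k] is a surjective homomorphism
   [Q -> Z^n]; two quantities have the same exponents exactly when they are
   scalar multiples of one basis monomial, i.e. exactly when they are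
   similar.  Hence [Q/~] is isomorphic to [Z^n]. *)

Section CommutativeMonoid.

Variables (X : Type) (mul : X -> X -> X) (one : X).
Hypothesis mulA : forall x y z, mul x (mul y z) = mul (mul x y) z.
Hypothesis mul1 : forall x, mul one x = x /\ mul x one = x.
Hypothesis mulC : forall x y, mul x y = mul y x.

Lemma mul1x x : mul one x = x. Proof. by case: (mul1 x). Qed.
Lemma mulx1 x : mul x one = x. Proof. by case: (mul1 x). Qed.

Lemma mulACA a b c d : mul (mul a b) (mul c d) = mul (mul a c) (mul b d).
Proof. by rewrite -!mulA; congr (mul a); rewrite !mulA (mulC b c). Qed.

Definition mpow x n := iter n (mul x) one.

Lemma mpowD x a b : mpow x (a + b)%N = mul (mpow x a) (mpow x b).
Proof. by elim: a => [|a IH] /=; rewrite ?mul1x // /mpow /= -/(mpow x _) IH mulA. Qed.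

Variables (e einv : X).
Hypothesis mulfV : mul e einv = one.

Lemma mpowV n : mul (mpow e n) (mpow einv n) = one.
Proof.
elim: n => [|n IH] /=; first by rewrite mul1x.
by rewrite /mpow /= -/(mpow e n) -/(mpow einv n) mulACA mulfV IH mul1x.
Qed.

(* [e^p einv^q] only depends on [p - q]: cancel [e^r einv^r] on both sides. *)
Lemma mpow_diff_eq p q p' q' : (p + q' = p' + q)%N ->
  mul (mpow e p) (mpow einv q) = mul (mpow e p') (mpow einv q').
Proof.
have pad r s t : mul (mpow e r) (mpow einv s) =
                 mul (mpow e (r + t)%N) (mpow einv (s + t)%N).
  by rewrite !mpowD mulACA mpowV mulx1.
by move=> H; rewrite (pad p q q') (pad p' q' q) H (addnC q).
Qed.

Lemma zpow_diff (k : int) (p q : nat) : k = p%:Z - q%:Z ->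
  zpow mul one e einv k = mul (mpow e p) (mpow einv q).
Proof.
case: k => n /= H.
  by rewrite -/(mpow e n) -(mulx1 (mpow e n)); apply: (@mpow_diff_eq n 0); lia.
transitivity (mul (mpow e 0) (mpow einv n.+1)); first by rewrite /= mul1x.
by apply: mpow_diff_eq; lia.
Qed.

Lemma zpowD (a b : int) : zpow mul one e einv (a + b) =
  mul (zpow mul one e einv a) (zpow mul one e einv b).
Proof.
have int_diff (c : int) : exists p q : nat, c = p%:Z - q%:Z.
  by case: c => n; [exists n, 0%N | exists 0%N, n.+1]; lia.
have [p [q ->]] := int_diff a; have [p' [q' ->]] := int_diff b.
rewrite !(@zpow_diff _ _ _ erefl) (@zpow_diff _ (p + p')%N (q + q')%N); last lia.
by rewrite !mpowD mulACA.
Qed.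

End CommutativeMonoid.

Section BasisMonomial.

Variables (X : Type) (mul : X -> X -> X) (one : X) (n : nat).
Variables (e einv : 'I_n -> X).

Lemma eq_basis_monomial (k k' : 'I_n -> int) : k =1 k' ->
  basis_monomial mul one e einv k = basis_monomial mul one e einv k'.
Proof. by move=> eqk; rewrite /basis_monomial; elim: (enum _) => //= i s ->; rewrite eqk. Qed.

Hypothesis mulA : forall x y z, mul x (mul y z) = mul (mul x y) z.
Hypothesis mul1 : forall x, mul one x = x /\ mul x one = x.

Lemma basis_monomial0 : basis_monomial mul one e einv (fun=> 0) = one.
Proof. by rewrite /basis_monomial; elim: (enum _) => //= i s ->; rewrite mul1x. Qed.

Hypothesis mulC : forall x y, mul x y = mul y x.
Hypothesis mulfV : forall i, mul (e i) (einv i) = one.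

Lemma basis_monomialD (k k' : 'I_n -> int) :
  basis_monomial mul one e einv (fun i => k i + k' i) =
  mul (basis_monomial mul one e einv k) (basis_monomial mul one e einv k').
Proof.
rewrite /basis_monomial; elim: (enum _) => /= [|i s ->]; first by rewrite mul1x.
by rewrite zpowD // mulACA.
Qed.

End BasisMonomial.

Section QuantitySpace.

Variables (K : fieldType) (Q : Type) (mul : Q -> Q -> Q) (one : Q).
Variables (scale : K -> Q -> Q) (n : nat) (e einv : 'I_n -> Q).
Hypothesis mulA : forall x y z, mul x (mul y z) = mul (mul x y) z.
Hypothesis mul1 : forall x, mul one x = x /\ mul x one = x.
Hypothesis scale1 : forall x, scale 1 x = x.
Hypothesis scaleA : forall a b x, scale a (scale b x) = scale (a * b) x.
Hypothesis scaleM : forall a x y,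
  scale a (mul x y) = mul (scale a x) y /\ scale a (mul x y) = mul x (scale a y).
Hypothesis mulC : forall x y, mul x y = mul y x.
Hypothesis mulfV : forall i, mul (e i) (einv i) = one.
Hypothesis basis_spans : forall x, exists (mu : K) (k : 'I_n -> int),
  x = scale mu (basis_monomial mul one e einv k).
Hypothesis basis_unique : forall (mu mu' : K) (k k' : 'I_n -> int),
  scale mu (basis_monomial mul one e einv k) =
  scale mu' (basis_monomial mul one e einv k') -> mu = mu' /\ (forall i, k i = k' i).

Local Notation M := (basis_monomial mul one e einv).

Lemma mul_scale a b x y : mul (scale a x) (scale b y) = scale (a * b) (mul x y).
Proof.
by rewrite -scaleA; have [_ ->] := scaleM b x y; have [<- _] := scaleM a x (scale b y).
Qed.

Lemma basis_exponent_exists x : exists k, exists mu, x = scale mu (M k).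
Proof. by have [mu [k ->]] := basis_spans x; exists k, mu. Qed.

Definition dim_exponent (x : Q) : 'I_n -> int :=
  proj1_sig (constructive_indefinite_description _ (basis_exponent_exists x)).

Lemma dim_exponentP x : exists mu, x = scale mu (M (dim_exponent x)).
Proof.
by rewrite /dim_exponent; case: constructive_indefinite_description.
Qed.

Lemma dim_exponent_eq x mu k : x = scale mu (M k) -> dim_exponent x =1 k.
Proof.
move=> Hx i; have [mu' Hx'] := dim_exponentP x.
by have [_ ->] := basis_unique (etrans (esym Hx') Hx).
Qed.

Lemma dim_exponent_monomial k : dim_exponent (M k) =1 k.
Proof. by apply: (dim_exponent_eq (mu := 1)); rewrite scale1. Qed.

Lemma dim_exponent_one : dim_exponent one =1 fun=> 0.
Proof. by rewrite -(basis_monomial0 e einv mul1); apply: dim_exponent_monomial. Qed.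

Lemma dim_exponent_mul x y :
  dim_exponent (mul x y) =1 fun i => dim_exponent x i + dim_exponent y i.
Proof.
have [mu Hx] := dim_exponentP x; have [mu' Hy] := dim_exponentP y.
apply: (dim_exponent_eq (mu := mu * mu')).
by rewrite basis_monomialD // -mul_scale -Hx -Hy.
Qed.

Lemma dim_exponent_qsim x y : dim_exponent x =1 dim_exponent y <-> qsim scale x y.
Proof.
have [mu Hx] := dim_exponentP x; have [mu' Hy] := dim_exponentP y.
split=> [eqxy | [a [b Hab]] i].
  by exists mu', mu; rewrite {1}Hx Hy !scaleA mulrC (eq_basis_monomial mul one e einv eqxy).
have Hab' : scale (a * mu) (M (dim_exponent x)) = scale (b * mu') (M (dim_exponent y)).
  by rewrite -!scaleA -Hx -Hy.
by have [_ ->] := basis_unique Hab'.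
Qed.

End QuantitySpace.

Theorem proposition3p20 (K : fieldType) (Q : Type) (mul : Q -> Q -> Q)
    (one : Q) (scale : K -> Q -> Q) :
  quantity_space mul one scale ->
  exists (m : nat) (phi : Q -> 'rV[int]_m),
    [/\ phi one = 0,
        (forall x y, phi (mul x y) = phi x + phi y),
        (forall v : 'rV[int]_m, exists x, phi x = v)
      & (forall x y, phi x = phi y <-> qsim scale x y)].
Proof.
case=> [[mulA mul1 scale1 scaleA scaleM] mulC [n [e [einv [eV spans uniq]]]]].
have mulfV i : mul (e i) (einv i) = one by case: (eV i).
exists n, (fun x => \row_i dim_exponent spans x i); split.
- by apply/rowP => i; rewrite !mxE (dim_exponent_one mul1 scale1 spans uniq).
- move=> x y; apply/rowP => i; rewrite !mxE.
  exact: (dim_exponent_mul mulA mul1 scaleA scaleM mulC mulfV spans uniq).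
- move=> v; exists (basis_monomial mul one e einv (v ord0)); apply/rowP => i.
  by rewrite !mxE (dim_exponent_monomial scale1 spans uniq).
- move=> x y; rewrite -(dim_exponent_qsim scaleA spans uniq); split.
  + by move=> /rowP eqxy i; have := eqxy i; rewrite !mxE.
  + by move=> eqxy; apply/rowP => i; rewrite !mxE.
Qed.
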